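(* Let $G$ be a nice connected graph of order $n$, maximum degree $\Delta$ and chromatic number $k$, and let $W$ be a closed walk of $G$ of length $p$ going through all vertices of $G$. Then ${\rm ML}^{\rm W}(G) \leq p + (n-1)(2k-2)+2\Delta$.
   Context: All graphs are finite and simple. A walk of a graph $G$ is a sequence of vertices $u_0u_1\dots u_p$ with $u_tu_{t+1}\in E(G)$ for all $t$ (vertices and edges may repeat); its length is $p$; it is closed if $u_0=u_p$. For a walk $W$ of $G$, $G+W$ is the multigraph on $V(G)$ whose edge multiset consists of $E(G)$ together with each edge added as many times as $W$ traverses it. A multigraph is locally irregular if no two adjacent vertices have the same degree; a walk is irregularising if $G+W$ is locally irregular. A graph is nice if it is connected and not isomorphic to $K_2$. ${\rm ML}^{\rm W}(G)$ denotes the minimum length of an irregularising walk of $G$ (a walk of length $0$ is allowed). *)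

From mathcomp Require Import all_boot.
Set Implicit Arguments. Unset Strict Implicit. Unset Printing Implicit Defensive.

Section Graphs.
Variable T : finType.

Definition simple_graph (e : rel T) : Prop := symmetric e /\ irreflexive e.

Definition connected_graph (e : rel T) : Prop := forall x y : T, connect e x y.

Definition isK2 (e : rel T) : Prop :=
  #|T| = 2 /\ forall x y : T, x != y -> e x y.

Definition nice (e : rel T) : Prop := connected_graph e /\ ~ isK2 e.

Definition deg (e : rel T) (v : T) : nat := #|[set u | e v u]|.

Definition max_degree (e : rel T) : nat := \max_(v : T) deg e v.

Definition colourable (e : rel T) (k : nat) : Prop :=
  exists f : T -> 'I_k, forall x y, e x y -> f x != f y.

Definition is_chromatic_number (e : rel T) (k : nat) : Prop :=
  colourable e k /\ forall j, colourable e j -> k <= j.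

(* A walk u_0 u_1 ... u_p is represented by its start x0 = u_0 and the list
   s = [u_1; ...; u_p]; its length is size s. *)
Definition is_walk (e : rel T) (x0 : T) (s : seq T) : bool := path e x0 s.
Definition walk_closed (x0 : T) (s : seq T) : bool := last x0 s == x0.
Definition walk_spanning (x0 : T) (s : seq T) : Prop := forall v, v \in x0 :: s.

Definition walk_steps (x0 : T) (s : seq T) : seq (T * T) := zip (x0 :: s) s.

(* Degree of v in the multigraph G + W: deg_G v plus, for each traversal of
   an edge, one for each endpoint equal to v (no loops since e is irreflexive). *)
Definition deg_plus (e : rel T) (x0 : T) (s : seq T) (v : T) : nat :=
  deg e v + count (fun p : T * T => p.1 == v) (walk_steps x0 s)
          + count (fun p : T * T => p.2 == v) (walk_steps x0 s).

(* G + W has the same adjacency as G (only copies of edges of G are added). *)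
Definition irregularising (e : rel T) (x0 : T) (s : seq T) : Prop :=
  is_walk e x0 s /\ forall u v, e u v -> deg_plus e x0 s u != deg_plus e x0 s v.

End Graphs.

(* For a closed walk W the degree of v in G + W is deg v + 2 (number of visits of v),
   so the half-degrees h v = deg_{G+W} v / 2 can be steered: inserting a detour
   u -> u' -> u along an edge raises h u and h u' by one, at the cost of 2 steps.
   Fix a proper k-colouring c.  If h v = c v (mod k) for every v, adjacent vertices
   get distinct degrees.  Processing a BFS tree from the deepest level up, at most
   k - 1 detours per tree edge fix every non-root vertex, for (n - 1)(2k - 2) steps.
   Tree detours do not change the alternating sum
   D = sum_v (-1)^(depth v) (h v - c v), and D = h r - c r (mod k) once every
   non-root vertex is fixed; so the root r is fixed too if k divides D beforehand.
   Detours along an edge whose ends have equal depth parity (one exists when k > 2)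
   shift D by +-2: for odd k this reaches D = 0 (mod k) within k - 1 detours, for
   even k within k/2 - 1 detours once D is even.  D is made even by ending the walk
   at a neighbour, or along a path b1 x b2, which flips the parity of sum_v h v.
   Since k <= Delta + 1 by greedy colouring, these extra steps cost at most 2 Delta. *)

From mathcomp Require Import all_boot all_algebra zify ring.
Set Implicit Arguments. Unset Strict Implicit. Unset Printing Implicit Defensive.
Import GRing.Theory Num.Theory.

Definition endpoint_count (T : eqType) (L : seq (T * T)) (v : T) : nat :=
  count (fun p => p.1 == v) L + count (fun p => p.2 == v) L.

Lemma endpoint_count_cons (T : eqType) (p : T * T) L v :
  endpoint_count (p :: L) v = (p.1 == v) + (p.2 == v) + endpoint_count L v.
Proof. by rewrite /endpoint_count /=; lia. Qed.

Section Walks.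
Variables (T : finType) (e : rel T).

Lemma deg_plusE y0 w v :
  deg_plus e y0 w v + (last y0 w == v) = deg e v + 2 * count_mem v w + (y0 == v).
Proof.
elim: w y0 => [|x w IH] y0; first by rewrite /deg_plus /=; lia.
by move: (IH x); rewrite /deg_plus /walk_steps /=; lia.
Qed.

Lemma deg_plus_closed x0 s v : last x0 s = x0 ->
  deg_plus e x0 s v = deg e v + 2 * count_mem v s.
Proof. by move=> s_closed; have := deg_plusE x0 s v; rewrite s_closed; lia. Qed.

Lemma deg_plus_cons y x w v :
  deg_plus e y (x :: w) v = deg_plus e x w v + (y == v) + (x == v).
Proof. by rewrite /deg_plus /walk_steps /=; lia. Qed.

Lemma deg_plus_rcons y0 w b v :
  deg_plus e y0 (rcons w b) v = deg_plus e y0 w v + (last y0 w == v) + (b == v).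
Proof.
have := deg_plusE y0 (rcons w b) v; have := deg_plusE y0 w v.
rewrite last_rcons -cats1 count_cat /=; lia.
Qed.

Hypothesis esym : symmetric e.

Lemma insert_backtrack y0 w y z :
  path e y0 w -> y \in y0 :: w -> e y z ->
  exists w', [/\ path e y0 w', last y0 w' = last y0 w, size w' = (size w).+2 &
     forall v, count_mem v w' = count_mem v w + (y == v) + (z == v)].
Proof.
move=> walk_w y_in e_yz; case/splitPl: y_in walk_w => w1 w2 last_w1.
rewrite cat_path last_w1 => /andP[walk_w1 walk_w2].
exists (w1 ++ z :: y :: w2); split.
- by rewrite cat_path last_w1 /= e_yz esym e_yz walk_w1.
- by rewrite !last_cat last_w1.
- by rewrite !size_cat /= !addnS.
- by move=> v; rewrite !count_cat /=; lia.
Qed.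

Lemma insert_backtracks y0 w (L : seq (T * T)) :
  path e y0 w -> walk_spanning y0 w -> all (fun p => e p.1 p.2) L ->
  exists w', [/\ path e y0 w', walk_spanning y0 w', size w' = size w + 2 * size L &
     forall v, deg_plus e y0 w' v = deg_plus e y0 w v + 2 * endpoint_count L v].
Proof.
move=> walk_w span_w; elim: L => [|p L IH] /=.
  by exists w; split=> [|||v]; rewrite ?addn0.
case/andP=> e_p /IH[w1 [walk1 span1 size1 deg1]].
have [w' [walk' last' size' count']] := insert_backtrack walk1 (span1 p.1) e_p.
exists w'; split=> //.
- move=> v; have := span1 v; rewrite !inE.
  by case: eqP => //= _; rewrite -!has_pred1 !has_count count'; lia.
- by rewrite size' size1; lia.
- move=> v; have := deg_plusE y0 w' v; have := deg_plusE y0 w1 v.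
  rewrite last' count' deg1 endpoint_count_cons.
  by move: (p.1 == v) (p.2 == v) => b1 b2; lia.
Qed.

Lemma rotate_closed_walk x0 s y :
  path e x0 s -> last x0 s = x0 -> walk_spanning x0 s -> y \in x0 :: s ->
  exists s', [/\ path e y s', last y s' = y, walk_spanning y s', size s' = size s &
     forall v, deg_plus e y s' v = deg_plus e x0 s v].
Proof.
move=> walk_s s_closed span_s y_in.
case/splitPl: y_in walk_s s_closed span_s => s1 s2 last_s1.
rewrite cat_path last_cat last_s1 => /andP[walk_s1 walk_s2] s_closed span_s.
have closed21 : last y (s2 ++ s1) = y by rewrite last_cat s_closed.
have closed12 : last x0 (s1 ++ s2) = x0 by rewrite last_cat last_s1.
exists (s2 ++ s1); split=> //.
- by rewrite cat_path walk_s2 s_closed.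
- move=> v; have := span_s v; rewrite !inE !mem_cat.
  case/or3P=> [/eqP->|->|->]; rewrite ?orbT //.
  by have := mem_last y s2; rewrite s_closed inE => /orP[->|->]; rewrite ?orbT.
- by rewrite !size_cat addnC.
- by move=> v; rewrite !deg_plus_closed // !count_cat [count_mem v s2 + _]addnC.
Qed.

Lemma extend_closed_walk x0 s z b :
  path e x0 s -> last x0 s = x0 -> walk_spanning x0 s -> e z b ->
  exists w, [/\ path e z w, walk_spanning z w, size w = (size s).+1 &
     forall v, deg_plus e z w v = deg_plus e x0 s v + (z == v) + (b == v)].
Proof.
move=> walk_s s_closed span_s e_zb.
have [s' [walk' closed' span' size' deg']] := rotate_closed_walk walk_s s_closed span_s (span_s z).
exists (rcons s' b); split.
- by rewrite rcons_path walk' closed' e_zb.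
- by move=> v; have := span' v; rewrite !inE mem_rcons inE => /orP[->|->]; rewrite ?orbT.
- by rewrite size_rcons size'.
- by move=> v; rewrite deg_plus_rcons deg' closed'.
Qed.

End Walks.

Section RootedTree.
Variables (T : finType) (e : rel T) (r : T).
Hypothesis esym : symmetric e.
Hypothesis r_conn : forall v, connect e r v.

Definition reachable_in (n : nat) (v : T) : bool :=
  [exists p : n.-tuple T, path e r p && (last r p == v)].

Lemma reachable_inP n v :
  reflect (exists p, [/\ size p = n, path e r p & last r p = v]) (reachable_in n v).
Proof.
apply: (iffP existsP) => [[p /andP[walk_p /eqP last_p]]|[p [size_p walk_p last_p]]].
  by exists p; rewrite size_tuple.
have size_p' : size p == n by rewrite size_p.
by exists (Tuple size_p'); rewrite /= walk_p last_p eqxx.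
Qed.

Lemma exists_reachable_in v : exists n, reachable_in n v.
Proof.
have /connectP[p walk_p last_p] := r_conn v.
by exists (size p); apply/reachable_inP; exists p.
Qed.

Definition dist (v : T) : nat := ex_minn (exists_reachable_in v).

Lemma dist_reachable v : reachable_in (dist v) v.
Proof. by rewrite /dist; case: ex_minnP. Qed.

Lemma dist_min n v : reachable_in n v -> dist v <= n.
Proof. by rewrite /dist; case: ex_minnP => m _; apply. Qed.

Lemma dist_root : dist r = 0.
Proof. by apply/eqP; rewrite -leqn0 dist_min //; apply/reachable_inP; exists [::]. Qed.

Lemma dist_parent u : u != r -> exists2 w, e u w & dist u = (dist w).+1.
Proof.
move=> u_neq_r; have /reachable_inP[p [size_p walk_p last_p]] := dist_reachable u.
case/lastP: p size_p walk_p last_p => [|p w] size_p walk_p last_p.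
  by rewrite -last_p eqxx in u_neq_r.
move: last_p walk_p size_p; rewrite last_rcons rcons_path size_rcons => ->.
case/andP=> walk_p e_pu size_p; exists (last r p); first by rewrite esym.
have dist_p : dist (last r p) <= size p by apply: dist_min; apply/reachable_inP; exists p.
suff : dist u <= (dist (last r p)).+1 by lia.
have /reachable_inP[q [size_q walk_q last_q]] := dist_reachable (last r p).
apply: dist_min; apply/reachable_inP; exists (rcons q u).
by rewrite size_rcons size_q rcons_path walk_q last_q e_pu last_rcons.
Qed.

Lemma exists_rooted_tree : exists (dep : T -> nat) (par : T -> T),
  dep r = 0 /\ forall u, u != r -> e u (par u) /\ dep u = (dep (par u)).+1.
Proof.
have /fin_all_exists[par parP] :
    forall u, exists w, u != r -> e u w /\ dist u = (dist w).+1.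
  move=> u; case: (eqVneq u r) => [_|/dist_parent[w e_uw dist_u]]; first by exists u.
  by exists w.
by exists dist, par; split; [exact: dist_root | exact: parP].
Qed.

End RootedTree.

Lemma sum_half_add_point (T : finType) (D f : T -> nat) a :
  \sum_v ((D v + (a == v)) %/ 2 + f v) = \sum_v (D v %/ 2 + f v) + odd (D a).
Proof.
rewrite (bigD1 a) //= [in RHS](bigD1 a) //= eqxx.
rewrite (eq_bigr (fun v => D v %/ 2 + f v)) => [|v /negPf v_na]; last first.
  by rewrite eq_sym v_na addn0.
lia.
Qed.

Lemma sum_half_add_pair (T : finType) (D f : T -> nat) a b : a != b ->
  \sum_v ((D v + (a == v) + (b == v)) %/ 2 + f v) =
  \sum_v (D v %/ 2 + f v) + odd (D a) + odd (D b).
Proof.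
move=> a_nb; rewrite (@sum_half_add_point _ (fun v => D v + (a == v))) sum_half_add_point.
by rewrite (negPf a_nb) addn0.
Qed.

Section SimpleGraphs.
Variables (T : finType) (e : rel T).
Hypotheses (esym : symmetric e) (eirr : irreflexive e).

Lemma deg_le_max_degree v : deg e v <= max_degree e.
Proof. exact: (leq_bigmax v). Qed.

Lemma colourable_max_degree : colourable e (max_degree e).+1.
Proof.
set D := max_degree e.
suff [f f_proper] : exists f : T -> 'I_D.+1,
    forall x y, x \in enum T -> y \in enum T -> e x y -> f x != f y.
  by exists f => x y; apply: f_proper; rewrite mem_enum.
elim: (enum T) => [|z s [f f_proper]]; first by exists (fun=> ord0).
set used := [set f y | y in [set y | e z y]].
have used_small : #|used| <= D := leq_trans (leq_imset_card _ _) (deg_le_max_degree z).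
have [colour colour_free] : exists colour, colour \notin used.
  apply/existsP; rewrite -negb_forall; apply/forallP => all_used.
  have : #|'I_D.+1| <= #|used| by apply/subset_leq_card/subsetP => i _; apply: all_used.
  by rewrite card_ord; lia.
exists (fun y => if y == z then colour else f y) => x y; rewrite !inE => x_in y_in e_xy.
case: (eqVneq x z) => [x_z|x_nz]; case: (eqVneq y z) => [y_z|y_nz].
- by rewrite x_z y_z eirr in e_xy.
- by apply: contraNneq colour_free => ->; apply/imsetP; exists y; rewrite // inE -x_z.
- by apply: contraNneq colour_free => <-; apply/imsetP; exists x; rewrite // inE -y_z esym.
- by apply: f_proper; rewrite ?(negPf x_nz) ?(negPf y_nz) in x_in y_in.
Qed.

Lemma colourable_two (f : T -> bool) : (forall x y, e x y -> f x != f y) -> colourable e 2.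
Proof.
move=> f_proper; exists (fun v => inord (f v)) => x y /f_proper.
by apply: contra => /eqP/(congr1 val); rewrite /= !inordK; case: (f x); case: (f y).
Qed.

Lemma exists_two_path u v : nice e -> e u v ->
  exists x b1 b2, [/\ e x b1, e x b2 & b1 != b2].
Proof.
move=> [conn not_K2] e_uv.
have [/existsP[x /existsP[b1 /existsP[b2 /and3P[]]]]|] :=
  boolP [exists x, exists b1, exists b2, [&& e x b1, e x b2 & b1 != b2]].
  by exists x, b1, b2.
rewrite negb_exists => /forallP no_two_path.
have nbr_uniq x b1 b2 : e x b1 -> e x b2 -> b1 = b2.
  move=> e1 e2; apply/eqP; apply: contraNT (no_two_path x) => b12.
  by apply/existsP; exists b1; apply/existsP; exists b2; rewrite e1 e2.
have walk_in a b p : e a b -> path e a p -> (last a p == a) || (last a p == b).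
  elim: p a b => [|y p IH] a b e_ab /=; first by rewrite eqxx.
  case/andP=> e_ay; rewrite -(nbr_uniq _ _ _ e_ab e_ay) => walk_p.
  by rewrite orbC; apply: IH walk_p; rewrite esym.
have in_uv z : (z == u) || (z == v).
  by have /connectP[p walk_p ->] := conn u z; apply: walk_in walk_p.
have u_neq_v : u != v by apply: contraTneq e_uv => ->; rewrite eirr.
case: not_K2; split.
  have : #|T| <= #|[set u; v]| by apply/subset_leq_card/subsetP => z _; rewrite !inE in_uv.
  by have := max_card [set u; v]; rewrite cards2 u_neq_v; lia.
move=> x y; have := in_uv x; have := in_uv y.
by case/orP=> /eqP->; case/orP=> /eqP->; rewrite ?eqxx // esym.
Qed.

Lemma exists_walk_even_half_sum (f : T -> nat) u0 v0 x0 s :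
  nice e -> e u0 v0 -> path e x0 s -> last x0 s = x0 -> walk_spanning x0 s ->
  exists y0 w, [/\ path e y0 w, walk_spanning y0 w, size w <= (size s).+2 &
    ~~ odd (\sum_v (deg_plus e y0 w v %/ 2 + f v))].
Proof.
move=> nice_e e_uv walk_s s_closed span_s.
pose D := deg_plus e x0 s; pose S := \sum_v (D v %/ 2 + f v).
have [S_even|S_odd] := boolP (~~ odd S); first by exists x0, s; split=> //; lia.
have [x [b1 [b2 [e_xb1 e_xb2 b1_nb2]]]] := exists_two_path nice_e e_uv.
have x_nb b : e x b -> x != b by move=> e_xb; apply: contraTneq e_xb => ->; rewrite eirr.
have extend b : e x b -> odd (D x) != odd (D b) -> exists y0 w, [/\ path e y0 w,
    walk_spanning y0 w, size w <= (size s).+2 & ~~ odd (\sum_v (deg_plus e y0 w v %/ 2 + f v))].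
  move=> e_xb parity.
  have [w [walk_w span_w size_w deg_w]] := extend_closed_walk walk_s s_closed span_s e_xb.
  exists x, w; split=> //; first by rewrite size_w.
  under eq_bigr => v _ do rewrite deg_w.
  by rewrite sum_half_add_pair ?x_nb //; move: S_odd parity; rewrite /S /D; lia.
case: (eqVneq (odd (D x)) (odd (D b1))) => [par1|]; last exact: extend.
case: (eqVneq (odd (D x)) (odd (D b2))) => [par2|]; last exact: extend.
have [w [walk_w span_w size_w deg_w]] := extend_closed_walk walk_s s_closed span_s e_xb2.
exists b1, (x :: w); split.
- by rewrite /= esym e_xb1.
- by move=> v; rewrite inE span_w orbT.
- by rewrite /= size_w.
under eq_bigr => v _ do rewrite deg_plus_cons deg_w.
rewrite !sum_half_add_point /= eqxx (eq_sym b2 b1) (eq_sym b2 x) (eq_sym b1 x).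
rewrite (negPf b1_nb2) (negPf (x_nb _ e_xb1)) (negPf (x_nb _ e_xb2)).
by move: S_odd par1 par2; rewrite /S /D; lia.
Qed.

Lemma exists_monochromatic_edge k (f : T -> bool) : is_chromatic_number e k -> 2 < k ->
  exists a b, e a b /\ f a = f b.
Proof.
move=> [_ k_min] k_gt2.
case: (pickP (fun p : T * T => e p.1 p.2 && (f p.1 == f p.2))) => [[a b]|none].
  by case/andP=> e_ab /eqP f_ab; exists a, b.
suff /k_min : colourable e 2 by lia.
by apply: (colourable_two (f := f)) => x y e_xy; have := none (x, y); rewrite /= e_xy => /negbT.
Qed.

End SimpleGraphs.

Lemma exists_modz_nat (m : int) (h : nat) : 0 < h ->
  exists2 w : nat, w < h & (h%:Z %| (m - w%:Z)%R)%Z.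
Proof.
move=> h_gt0; have h_neq0 : (h%:Z != 0)%R by rewrite eqz_nat -lt0n.
exists `|(m %% h)%Z|%N; first by rewrite -ltz_nat gez0_abs ?modz_ge0 ?ltz_pmod.
by rewrite gez0_abs ?modz_ge0 // {1}(divz_eq m h) addrK dvdz_mull.
Qed.

Lemma exists_dvdz_add_double (k : nat) (E : int) : 0 < k -> odd k \/ (2 %| E)%Z ->
  exists2 w : nat, 2 * w <= (if odd k then 2 * k - 2 else k - 2) & (k%:Z %| (E + (2 * w)%:Z)%R)%Z.
Proof.
move=> k_gt0; have k_half := odd_double_half k; case: ifP => [k_odd _|k_even [//|E_even]].
  (* [(k + 1) / 2] is the inverse of 2 modulo the odd [k]. *)
  have [w w_lt /dvdzP[t wE]] := exists_modz_nat (- E * (k./2.+1)%:Z)%R k_gt0.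
  exists w; first lia.
  have w_eq : Posz w = (- E * Posz k./2.+1 - t * Posz k)%R by rewrite -wE; ring.
  have kE : Posz k = (2 * Posz k./2 + 1)%R by rewrite k_odd in k_half; lia.
  by apply/dvdzP; exists (- E - 2 * t)%R; rewrite PoszM w_eq kE intS; ring.
have [E2 ->] := dvdzP E_even.
have kE : Posz k = (2 * Posz k./2)%R by rewrite k_even in k_half; lia.
have [|w w_lt /dvdzP[t wE]] := exists_modz_nat (- E2)%R (_ : 0 < k./2); first lia.
exists w; first lia.
have w_eq : Posz w = (- E2 - t * Posz k./2)%R by rewrite -wE; ring.
by apply/dvdzP; exists (- t)%R; rewrite PoszM w_eq kE; ring.
Qed.

Lemma sum_indicator (T : finType) (F : T -> int) x :
  (\sum_v F v * (x == v)%:Z = F x)%R.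
Proof.
rewrite (bigD1 x) //= eqxx mulr1 big1 ?addr0 // => v /negPf.
by rewrite eq_sym => ->; rewrite mulr0.
Qed.

Lemma modnD_correction k X y : y < k -> (X + (y + k - X %% k) %% k) %% k = y.
Proof.
move=> y_lt; have X_mod_lt : X %% k < k by rewrite ltn_mod; lia.
rewrite modnDmr; have -> : X + (y + k - X %% k) = (X %/ k).+1 * k + y.
  by rewrite mulSnr {1}(divn_eq X k); lia.
by rewrite modnMDl modn_small.
Qed.

Lemma dvdz_subn_mod (k x y : nat) : (k%:Z %| (x%:Z - y%:Z)%R)%Z = (x == y %[mod k]).
Proof. by rewrite -eqz_mod_dvd !modz_nat eqz_nat. Qed.

Section Correction.
Variables (T : finType) (r : T) (dep : T -> nat) (par : T -> T).
Hypothesis dep_root : dep r = 0.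
Hypothesis dep_par : forall u, u != r -> dep u = (dep (par u)).+1.
Variables (k : nat) (c : T -> nat).
Hypothesis c_lt : forall v, c v < k.

Definition depth_sign (v : T) : int := ((-1) ^+ dep v)%R.

Definition defect (q : T -> nat) : int := (\sum_v depth_sign v * ((q v)%:Z - (c v)%:Z))%R.

Lemma eq_defect q1 q2 : q1 =1 q2 -> defect q1 = defect q2.
Proof. by move=> eq_q; apply: eq_bigr => v _; rewrite eq_q. Qed.

Lemma defect_add (q f : T -> nat) :
  defect (fun v => q v + f v) = (defect q + \sum_v depth_sign v * (f v)%:Z)%R.
Proof. by rewrite /defect -big_split; apply: eq_bigr => v _ /=; rewrite PoszD; ring. Qed.

Lemma signed_endpoint_count L :
  (\sum_v depth_sign v * (endpoint_count L v)%:Z =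
   \sum_(p <- L) (depth_sign p.1 + depth_sign p.2))%R.
Proof.
elim: L => [|p L IH]; first by rewrite big_nil big1 // => v _; rewrite mulr0.
rewrite big_cons -IH -(sum_indicator depth_sign p.1) -(sum_indicator depth_sign p.2).
rewrite -!big_split /=.
by apply: eq_bigr => v _; rewrite endpoint_count_cons 2!PoszD; ring.
Qed.

Lemma depth_sign_eq u v : odd (dep u) = odd (dep v) -> depth_sign u = depth_sign v.
Proof. by rewrite /depth_sign -signr_odd -(signr_odd _ (dep v)) => ->. Qed.

Lemma depth_signK v : (depth_sign v * depth_sign v)%R = 1%R.
Proof. by rewrite /depth_sign -exprD -signr_odd oddD addbb. Qed.

Lemma defect_parity q : (2 %| defect q)%Z = ~~ odd (\sum_v (q v + c v)).
Proof.
set N := \sum_v (q v + c v).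
rewrite -[defect q](subrK (Posz N)) rpredDl; first by rewrite dvdzE dvdn2.
rewrite (big_morph Posz PoszD (erefl (Posz 0))) /defect -sumrB rpred_sum // => v _.
rewrite /depth_sign -signr_odd PoszD; case: odd; apply/dvdzP.
  by exists (- (q v)%:Z)%R; ring.
by exists (- (c v)%:Z)%R; ring.
Qed.

Definition tree_edges (a : T -> nat) : seq (T * T) :=
  flatten [seq nseq (a u) (u, par u) | u <- index_enum T].

Lemma size_tree_edges a : size (tree_edges a) = \sum_u a u.
Proof.
by rewrite size_flatten sumnE /shape !big_map; apply: eq_bigr => u _; rewrite size_nseq.
Qed.

Lemma endpoint_count_tree_edges a v :
  endpoint_count (tree_edges a) v = a v + \sum_(u | par u == v) a u.
Proof.
rewrite /endpoint_count !count_flatten !sumnE !big_map.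
under eq_bigr => u _ do rewrite count_nseq /=.
under [in X in _ + X]eq_bigr => u _ do rewrite count_nseq /=.
rewrite (bigD1 v) //= eqxx mul1n big1 => [|u /negPf->] //.
rewrite addn0 [in RHS]big_mkcond; congr (_ + _).
by apply: eq_bigr => u _; case: (_ == _); rewrite ?mul1n.
Qed.

Lemma tree_edges_balanced a : a r = 0 ->
  (\sum_(p <- tree_edges a) (depth_sign p.1 + depth_sign p.2))%R = 0%R.
Proof.
move=> a_r; rewrite big_flatten big_map big1 // => u _.
case: (eqVneq u r) => [->|u_nr]; first by rewrite a_r big_nil.
rewrite big1_seq // => p /andP[_ /nseqP[-> _]].
by rewrite /depth_sign /= (dep_par u_nr) exprS mulN1r addNr.
Qed.

Lemma tree_correction_nonroot (q : T -> nat) :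
  exists a : T -> nat, [/\ a r = 0, forall v, a v < k &
    forall v, v != r -> (q v + a v + \sum_(u | par u == v) a u) %% k = c v].
Proof.
have k_gt0 : 0 < k by have := c_lt r; lia.
pose N := (\max_v dep v).+1.
suff /(_ N)[a [a_r a_lt a_ok]] : forall j, exists a : T -> nat, [/\ a r = 0, forall v, a v < k &
    forall v, v != r -> N - j <= dep v -> (q v + a v + \sum_(u | par u == v) a u) %% k = c v].
  by exists a; split=> // v v_nr; apply: a_ok; rewrite ?subnn.
elim=> [|j [a [a_r a_lt a_ok]]].
  by exists (fun=> 0); split=> // v _; rewrite subn0 leqNgt ltnS leq_bigmax.
(* Changing [a] on level [m] only affects the children sums on level [m - 1]. *)
pose m := N - j.+1.
pose a' v := if (dep v == m) && (v != r)
  then (c v + k - (q v + \sum_(u | par u == v) a u) %% k) %% k else a v.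
have children_unchanged v : m <= dep v ->
    \sum_(u | par u == v) a' u = \sum_(u | par u == v) a u.
  move=> m_le; apply: eq_bigr => u /eqP par_u; rewrite /a'.
  case: (eqVneq u r) => [->|u_nr]; first by rewrite andbF.
  by rewrite (dep_par u_nr) par_u ifN //; apply/nandP; left; apply/eqP; lia.
exists a'; split.
- by rewrite /a' eqxx andbF.
- by move=> v; rewrite /a'; case: ifP => _; rewrite ?ltn_mod.
- move=> v v_nr m_le; rewrite children_unchanged // /a' v_nr andbT.
  case: eqP => [_|dep_nm]; first by rewrite addnAC modnD_correction.
  by apply: a_ok => //; lia.
Qed.

Lemma tree_correction (q : T -> nat) : (k %| defect q)%Z ->
  exists a : T -> nat, [/\ a r = 0, forall v, a v < k &
    forall v, (q v + endpoint_count (tree_edges a) v) %% k = c v].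
Proof.
move=> k_defect; have [a [a_r a_lt a_ok]] := tree_correction_nonroot q.
pose q' v := q v + endpoint_count (tree_edges a) v.
have ok_nonroot v : v != r -> q' v %% k = c v.
  by move=> v_nr; rewrite /q' endpoint_count_tree_edges addnA a_ok.
exists a; split=> // v; case: (eqVneq v r) => [->|/ok_nonroot//].
have : (k %| defect q')%Z.
  by rewrite defect_add signed_endpoint_count tree_edges_balanced // addr0.
rewrite /defect (bigD1 r) //= rpredDr; last first.
  rewrite rpred_sum // => u /ok_nonroot q'_ok; apply: dvdz_mull.
  by rewrite dvdz_subn_mod q'_ok modn_small.
by rewrite /depth_sign dep_root expr0 mul1r dvdz_subn_mod (modn_small (c_lt r)) => /eqP.
Qed.

End Correction.

Section IrregularisingWalks.
Variables (T : finType) (e : rel T) (k : nat) (c : T -> 'I_k) (dep : T -> nat).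
Hypothesis esym : symmetric e.

Local Notation defect := (defect dep (fun v => nat_of_ord (c v))).
Local Notation half_deg y0 w := (fun v => deg_plus e y0 w v %/ 2).

Lemma half_deg_backtracks y0 w w' L :
  (forall v, deg_plus e y0 w' v = deg_plus e y0 w v + 2 * endpoint_count L v) ->
  half_deg y0 w' =1 (fun v => deg_plus e y0 w v %/ 2 + endpoint_count L v).
Proof. by move=> deg_w' v; rewrite deg_w' addnC mulnC divnMDl // addnC. Qed.

Lemma irregularising_of_half_deg y0 w : (forall x y, e x y -> c x != c y) ->
  path e y0 w -> (forall v, (deg_plus e y0 w v %/ 2) %% k = c v) -> irregularising e y0 w.
Proof.
move=> c_proper walk_w half_ok; split=> // u v /c_proper; apply: contra => /eqP deg_uv.
by apply/eqP/val_inj; rewrite /= -!half_ok deg_uv.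
Qed.

Lemma exists_irregularising_walk r par y0 w : (forall x y, e x y -> c x != c y) ->
  dep r = 0 -> (forall u, u != r -> e u (par u) /\ dep u = (dep (par u)).+1) ->
  path e y0 w -> walk_spanning y0 w -> (k %| defect (half_deg y0 w))%Z ->
  exists w', irregularising e y0 w' /\ size w' <= size w + (#|T| - 1) * (2 * k - 2).
Proof.
move=> c_proper dep_root tree_par walk_w span_w k_defect.
have dep_par u : u != r -> dep u = (dep (par u)).+1 by case/tree_par.
have [a [a_r a_lt a_ok]] := tree_correction dep_root dep_par (fun v => ltn_ord (c v)) k_defect.
have tree_ok : all (fun p => e p.1 p.2) (tree_edges par a).
  apply/allP => p /flattenP[_ /mapP[u _ ->] /nseqP[-> a_pos]] /=.
  by apply: (tree_par u _).1; apply: contraTneq a_pos => ->; rewrite a_r.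
have [w' [walk' _ size' deg']] := insert_backtracks esym walk_w span_w tree_ok.
exists w'; split.
  by apply: irregularising_of_half_deg => // v; rewrite (half_deg_backtracks deg').
have : \sum_u a u <= (#|T| - 1) * (k - 1).
  rewrite (bigD1 r) //= a_r add0n (@leq_trans (\sum_(u | u != r) (k - 1))) //.
    by apply: leq_sum => u _; have := a_lt u; lia.
  by rewrite sum_nat_const cardC1 -subn1.
have -> : 2 * k - 2 = 2 * (k - 1) by lia.
by rewrite size' size_tree_edges mulnCA leq_add2l leq_pmul2l.
Qed.

Lemma exists_walk_defect_parity u0 v0 x0 s :
  irreflexive e -> nice e -> e u0 v0 ->
  path e x0 s -> last x0 s = x0 -> walk_spanning x0 s ->
  exists y0 w, [/\ path e y0 w, walk_spanning y0 w, size w <= size s + 2 * ~~ odd k &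
    odd k \/ (2 %| defect (half_deg y0 w))%Z].
Proof.
move=> eirr nice_e e_uv walk_s s_closed span_s.
have [k_odd|k_even] := boolP (odd k).
  by exists x0, s; split=> //; [rewrite addn0 | left].
have [y0 [w [walk_w span_w size_w even_w]]] :=
  exists_walk_even_half_sum esym eirr (fun v => c v) nice_e e_uv walk_s s_closed span_s.
exists y0, w; split=> //; first by rewrite addn2.
by right; rewrite defect_parity.
Qed.

Lemma exists_balanced_walk y0 w :
  path e y0 w -> walk_spanning y0 w -> odd k \/ (2 %| defect (half_deg y0 w))%Z ->
  (2 < k -> exists a b, e a b /\ odd (dep a) = odd (dep b)) ->
  exists w', [/\ path e y0 w', walk_spanning y0 w',
    size w' <= size w + (if odd k then 2 * k - 2 else k - 2) &
    (k %| defect (half_deg y0 w'))%Z].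
Proof.
move=> walk_w span_w parity same_parity_edge.
have k_gt0 : 0 < k := leq_ltn_trans (leq0n _) (ltn_ord (c y0)).
(* For [k <= 2] the number of detours found below is 0, so any [a = b] will do. *)
have [a [b [e_ab sg_ab]]] : exists a b, (2 < k -> e a b) /\ depth_sign dep a = depth_sign dep b.
  case: (leqP k 2) => [_|/same_parity_edge[a [b [e_ab dep_ab]]]]; first by exists y0, y0.
  by exists a, b; split=> //; apply: depth_sign_eq.
set E := defect (half_deg y0 w).
have [n n_le k_dvd] : exists2 n, 2 * n <= (if odd k then 2 * k - 2 else k - 2) &
    (k%:Z %| (depth_sign dep a * E + (2 * n)%:Z)%R)%Z.
  by apply: exists_dvdz_add_double => //; case: parity => [|/(dvdz_mull (depth_sign dep a))]; auto.
have edges_ok : all (fun p => e p.1 p.2) (nseq n (a, b)).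
  apply/allP => p /nseqP[-> n_pos]; apply: e_ab.
  by move: n_le; case: ifP => k_odd; lia.
have [w' [walk' span' size' deg']] := insert_backtracks esym walk_w span_w edges_ok.
exists w'; split=> //; first by rewrite size' size_nseq; lia.
rewrite (eq_defect _ _ (half_deg_backtracks deg')) defect_add signed_endpoint_count.
rewrite big_nseq iter_addr_0 /= -sg_ab pmulrn mulrzz.
have -> : (E + (depth_sign dep a + depth_sign dep a) * n%:Z =
           depth_sign dep a * (depth_sign dep a * E + (2 * n)%:Z))%R.
  by rewrite PoszM mulrDr mulrA depth_signK; ring.
exact: dvdz_mull.
Qed.

End IrregularisingWalks.

Theorem theorem4p5 (T : finType) (e : rel T) (k : nat) (x0 : T) (s : seq T) :
  simple_graph e -> nice e ->
  is_chromatic_number e k ->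
  is_walk e x0 s -> walk_closed x0 s -> walk_spanning x0 s ->
  exists (y0 : T) (w : seq T),
    irregularising e y0 w /\
    size w <= size s + (#|T| - 1) * (2 * k - 2) + 2 * max_degree e.
Proof.
move=> [esym eirr] nice_e chi_k walk_s /eqP s_closed span_s.
case: (pickP (fun p : T * T => e p.1 p.2)) => [[u0 v0] /= e_uv|no_edge]; last first.
  exists x0, [::]; split=> //; split=> // u v e_uv.
  by have := no_edge (u, v); rewrite /= e_uv.
have [[c c_proper] k_min] := chi_k.
have D_pos : 0 < max_degree e.
  apply: leq_trans (deg_le_max_degree e u0); rewrite card_gt0; apply/set0Pn.
  by exists v0; rewrite inE.
have k_le : k <= (max_degree e).+1 := k_min _ (colourable_max_degree esym eirr).
have [dep [par [dep_root tree_par]]] := exists_rooted_tree esym (nice_e.1 x0).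
have [y0 [w0 [walk0 span0 size0 parity0]]] :=
  exists_walk_defect_parity c dep esym eirr nice_e e_uv walk_s s_closed span_s.
have [w1 [walk1 span1 size1 defect1]] := exists_balanced_walk esym walk0 span0 parity0
  (fun k_gt2 => exists_monochromatic_edge (fun v => odd (dep v)) chi_k k_gt2).
have [w2 [irr size2]] :=
  exists_irregularising_walk esym c_proper dep_root tree_par walk1 span1 defect1.
by exists y0, w2; split=> //; move: size0 size1 size2; case: (odd k) => /=; lia.
Qed.
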